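(* Let $\mathcal{A}$ be the B\''uchi automaton over $\{a,b\}$ with states $q_0$ (initial) and $q_1$ (accepting) and transitions $q_0\xrightarrow{a}q_1$, $q_1\xrightarrow{b}q_0$, so that $\mathfrak{L}(\mathcal{A})=\{(ab)^\omega\}$. Then there is no automaton $\mathcal{C}$ with $\mathfrak{J}(\mathcal{C})=\mathfrak{J}_{\exists\boxplus}(\mathcal{A})$. In particular, $(ab)^\omega\in\mathfrak{J}_{\exists\boxplus}(\mathcal{A})$ while the word $aba^2b^2a^3b^3\cdots$ (which satisfies $\sim$ with $(ab)^\omega$) is not in $\mathfrak{J}_{\exists\boxplus}(\mathcal{A})$.
   Context: Automata are nondeterministic B\''uchi automata over infinite words. For $w\in\Sigma^\omega$, $\Psi(w)\in\mathbb{N}_\infty^\Sigma$ gives the number of occurrences of each letter ($\infty$ if infinite); $w\sim w'$ iff $\Psi(w)=\Psi(w')$; $\mathfrak{J}(\mathcal{C})=\{w:\exists w'\sim w,\ w'\in\mathfrak{L}(\mathcal{C})\}$. For $k\ge1$, $w\sim_{k\boxplus}w'$ means $w=x_1x_2\cdots$, $w'=y_1y_2\cdots$ with $|x_i|=|y_i|=k$ and each $y_i$ a permutation of $x_i$. $\mathfrak{J}_{\exists\boxplus}(\mathcal{A})=\{w:\exists k\ge1\ \exists w'\sim_{k\boxplus}w,\ w'\in\mathfrak{L}(\mathcal{A})\}$. *)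

From HB Require Import structures.
From mathcomp Require Import all_boot.
Set Implicit Arguments. Unset Strict Implicit. Unset Printing Implicit Defensive.

Definition oword (Sigma : Type) := nat -> Sigma.

Unset Implicit Arguments.
Record automaton (Sigma : finType) := Automaton {
  state : finType;
  init : pred state;
  trans : state -> Sigma -> state -> bool;
  acc : pred state }.
Set Implicit Arguments.
Arguments state {Sigma}. Arguments init {Sigma}. Arguments trans {Sigma}. Arguments acc {Sigma}.

Definition accepting_run (Sigma : finType) (A : automaton Sigma)
    (w : oword Sigma) (r : nat -> state A) : Prop :=
  init A (r 0) /\
  (forall i, trans A (r i) (w i) (r i.+1)) /\
  (forall n, exists m, n <= m /\ acc A (r m)).

Definition lang (Sigma : finType) (A : automaton Sigma) (w : oword Sigma) : Prop :=
  exists r, @accepting_run Sigma A w r.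

Definition occ (Sigma : finType) (w : oword Sigma) (c : Sigma) (n : nat) : nat :=
  count (fun i => w i == c) (iota 0 n).

(** [Psi_is w c x] : the Parikh value Psi(w)(c) in N_infty equals [x]
    ([None] encodes infinity). *)
Definition Psi_is (Sigma : finType) (w : oword Sigma) (c : Sigma)
    (x : option nat) : Prop :=
  match x with
  | Some k => exists N, forall n, N <= n -> occ w c n = k
  | None => forall k, exists n, k < occ w c n
  end.

Definition psi_equiv (Sigma : finType) (w w' : oword Sigma) : Prop :=
  forall c x, Psi_is w c x <-> Psi_is w' c x.

Definition block (Sigma : finType) (k : nat) (w : oword Sigma) (i : nat) : seq Sigma :=
  mkseq (fun j => w (i * k + j)) k.

Definition block_perm (Sigma : finType) (k : nat) (w w' : oword Sigma) : Prop :=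
  forall i, perm_eq (block k w i) (block k w' i).

Definition J (Sigma : finType) (C : automaton Sigma) (w : oword Sigma) : Prop :=
  exists w', psi_equiv w w' /\ lang C w'.

Definition Jbox (Sigma : finType) (A : automaton Sigma) (w : oword Sigma) : Prop :=
  exists k, 0 < k /\ exists w', block_perm k w w' /\ lang A w'.

Inductive letter := La | Lb.
Definition letter_to_bool (x : letter) : bool := if x is La then true else false.
Definition bool_to_letter (x : bool) : letter := if x then La else Lb.
Lemma letter_boolK : cancel letter_to_bool bool_to_letter.
Proof. by case. Qed.
HB.instance Definition _ := Equality.copy letter (can_type letter_boolK).
HB.instance Definition _ := Choice.copy letter (can_type letter_boolK).
HB.instance Definition _ := Countable.copy letter (can_type letter_boolK).
HB.instance Definition _ := Finite.copy letter (can_type letter_boolK).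

(** The automaton A: states q0 = false (initial), q1 = true (accepting);
    transitions q0 -a-> q1 and q1 -b-> q0. *)
Definition A_ab : automaton letter :=
  @Automaton letter bool
    (fun q => q == false)
    (fun q x q' => ((q == false) && (x == La) && (q' == true))
                || ((q == true) && (x == Lb) && (q' == false)))
    (fun q => q == true).

Definition ab_omega : oword letter := fun i => if odd i then Lb else La.

(** a b a^2 b^2 a^3 b^3 ... : concatenation of the blocks a^n b^n, n >= 1
    (the first i+1 blocks have total length > i, so position i is covered). *)
Definition w_bad : oword letter := fun i =>
  nth La (flatten [seq nseq n La ++ nseq n Lb | n <- iota 1 i.+1]) i.

From mathcomp Require Import all_boot.
From mathcomp Require Import zify.
From Stdlib Require Import FunctionalExtensionality.

Set Implicit Arguments.
Unset Strict Implicit.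
Unset Printing Implicit Defensive.

(* The language of A_ab is the single word (ab)^omega: from the initial state
   the run is forced to alternate q0, q1, which forces the letters.

   Non-existence of C rests on one invariant: every language of the form J(C)
   is closed under ~ (Psi-equivalence is an equivalence relation).  So it
   suffices to exhibit w_bad ~ (ab)^omega with (ab)^omega in J_{exists boxplus}
   (take k = 1) but w_bad not in it.
   - w_bad ~ (ab)^omega: both words contain every letter infinitely often, and
     any two such words have the same Parikh image (all values infinite).
   - w_bad is not in J_{exists boxplus}(A_ab): for k > 0 let n = 3k; w_bad has
     a run of n letters a starting at n(n-1), a multiple of k.  Block
     permutations preserve blocks consisting of a single letter, so the
     permuted word would contain two consecutive blocks of a's, hence the
     factor aa, which (ab)^omega does not contain. *)

Section Parikh.
Variable Sigma : finType.
Implicit Types (w : oword Sigma) (c : Sigma).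

Lemma occS w c n : occ w c n.+1 = occ w c n + (w n == c).
Proof. by rewrite /occ -addn1 iotaD count_cat /= addn0. Qed.

Lemma occ_mono w c n m : n <= m -> occ w c n <= occ w c m.
Proof.
move=> /subnKC <-; elim: (m - n) => [|d IH]; first by rewrite addn0.
by rewrite addnS occS; lia.
Qed.

Definition inf_often w c : Prop := forall m, exists p, m <= p /\ w p = c.

Lemma inf_often_Psi w c : inf_often w c -> Psi_is w c None.
Proof.
move=> Hinf; elim=> [|k [n Hn]].
  have [p [_ Hp]] := Hinf 0; exists p.+1; rewrite occS Hp eqxx; lia.
have [p [Hp Hwp]] := Hinf n; exists p.+1; rewrite occS Hwp eqxx.
have := occ_mono w c Hp; lia.
Qed.

Lemma Psi_inf_not_fin w c k : Psi_is w c None -> ~ Psi_is w c (Some k).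
Proof.
move=> Hinf [N HN]; have [n Hn] := Hinf k.
have := occ_mono w c (leq_maxl n N); have := HN (maxn n N) (leq_maxr n N); lia.
Qed.

Lemma inf_often_psi_equiv w w' :
  (forall c, inf_often w c) -> (forall c, inf_often w' c) -> psi_equiv w w'.
Proof.
move=> Hw Hw' c [k|]; split=> H.
- by case: (Psi_inf_not_fin (inf_often_Psi (Hw c)) H).
- by case: (Psi_inf_not_fin (inf_often_Psi (Hw' c)) H).
- exact: inf_often_Psi.
- exact: inf_often_Psi.
Qed.

Lemma J_psi_closed (C : automaton Sigma) w w' :
  psi_equiv w w' -> J C w' -> J C w.
Proof.
move=> Eww' [v [Ew'v Lv]]; exists v; split=> // c x.
by rewrite Eww'; exact: Ew'v.
Qed.

Lemma block_constP k w i c :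
  reflect (forall j, j < k -> w (i * k + j) = c) (all (pred1 c) (block k w i)).
Proof.
rewrite /block /mkseq all_map.
apply: (iffP allP) => [H j jk | H j].
- by apply/eqP; apply: H; rewrite mem_iota.
- by rewrite mem_iota => /andP[_ jk] /=; rewrite H.
Qed.

Lemma block_perm_const k w w' i c :
  block_perm k w w' -> (forall j, j < k -> w (i * k + j) = c) ->
  forall j, j < k -> w' (i * k + j) = c.
Proof.
move=> Hperm /block_constP Hw; apply/block_constP.
by rewrite -(perm_all _ (Hperm i)).
Qed.

End Parikh.

Lemma ab_omega_inf_often c : inf_often ab_omega c.
Proof.
move=> m; case: c.
- by exists m.*2; split; [lia | rewrite /ab_omega odd_double].
- by exists m.*2.+1; split; [lia | rewrite /ab_omega /= odd_double].
Qed.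

Lemma ab_omega_no_aa p : ab_omega p = La -> ab_omega p.+1 = Lb.
Proof. by rewrite /ab_omega /=; case: (odd p). Qed.

(* L(A_ab) = {(ab)^omega}: any run must be q0 q1 q0 q1 ... *)
Lemma lang_A_ab w : lang A_ab w <-> w = ab_omega.
Proof.
split=> [[r [r0 [rtrans _]]] | ->].
  have r_odd : forall i, r i = odd i.
    elim=> [|i IH]; first by move/eqP: r0.
    move: (rtrans i); rewrite /= IH.
    by case: (odd i) => /=; case: (w i) => //=; case: (r i.+1).
  apply: functional_extensionality => i.
  move: (rtrans i); rewrite /= !r_odd /ab_omega /=.
  by case: (odd i) => /=; case: (w i).
exists (fun i => odd i); split=> //; split.
  by move=> i; rewrite /= /ab_omega; case: (odd i).
by move=> n; exists n.*2.+1; split; [lia | rewrite /= odd_double].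
Qed.

(* (ab)^omega lies in J_{exists boxplus}(A_ab), with blocks of length 1. *)
Lemma Jbox_ab_omega : Jbox A_ab ab_omega.
Proof.
exists 1; split=> //; exists ab_omega; split; last exact/lang_A_ab.
by move=> i.
Qed.

Definition ab_block (j : nat) : seq letter := nseq j La ++ nseq j Lb.

Definition ab_prefix (m : nat) : seq letter := flatten [seq ab_block j | j <- iota 1 m].

Lemma size_ab_prefix m : size (ab_prefix m) = m * m.+1.
Proof.
elim: m => [//|m IH].
rewrite /ab_prefix -[m.+1]addn1 iotaD map_cat flatten_cat size_cat -/(ab_prefix m) IH.
by rewrite /= cats0 size_cat /= !size_nseq; lia.
Qed.

Lemma w_bad_at n t : 0 < n -> t < n.*2 ->
  w_bad (n * (n - 1) + t) = if t < n then La else Lb.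
Proof.
move=> n_gt0 t_lt; rewrite /w_bad.
have -> : (n * (n - 1) + t).+1 = (n - 1) + (1 + ((n * (n - 1) + t).+1 - n)) by nia.
rewrite iotaD iotaD map_cat flatten_cat -/(ab_prefix (n - 1)).
rewrite nth_cat size_ab_prefix.
have -> : n * (n - 1) + t < (n - 1) * (n - 1).+1 = false by apply/negbTE; nia.
have -> : n * (n - 1) + t - (n - 1) * (n - 1).+1 = t by nia.
have -> : 1 + (n - 1) = n by lia.
rewrite map_cat flatten_cat /= cats0 nth_cat size_cat !size_nseq.
have -> : t < n + n by lia.
rewrite nth_cat size_nseq; case: ifP => t_n; rewrite nth_nseq ?t_n //.
by have -> : t - n < n by lia.
Qed.

Lemma w_bad_inf_often c : inf_often w_bad c.
Proof.
move=> m; case: c.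
- exists (m.+1 * (m.+1 - 1) + 0); split; first nia.
  by rewrite w_bad_at //; lia.
- exists (m.+1 * (m.+1 - 1) + m.+1); split; first nia.
  by rewrite w_bad_at ?ltnn //; lia.
Qed.

Lemma w_bad_a_blocks k : 0 < k ->
  exists i, forall j, j < k.*2 -> w_bad (i * k + j) = La.
Proof.
move=> k_gt0; exists (3 * (3 * k - 1)) => j j_lt.
have -> : 3 * (3 * k - 1) * k = 3 * k * (3 * k - 1) by lia.
by rewrite w_bad_at; [case: ifP => //; lia | lia | lia].
Qed.

Lemma not_Jbox_w_bad : ~ Jbox A_ab w_bad.
Proof.
move=> [k [k_gt0 [w' [Hperm /lang_A_ab w'E]]]]; subst w'.
have [i Hrun] := w_bad_a_blocks k_gt0.
have run_ab : forall j, j < k.*2 -> ab_omega (i * k + j) = La.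
  move=> j j_lt; have [j_lt_k | k_le_j] := ltnP j k.
  - by apply: (block_perm_const Hperm) => // j' j'_lt; apply: Hrun; lia.
  - have -> : i * k + j = i.+1 * k + (j - k) by rewrite mulSn; lia.
    apply: (block_perm_const Hperm); last lia.
    by move=> j' j'_lt; rewrite mulSn (addnC k) -addnA; apply: Hrun; lia.
have a0 : ab_omega (i * k) = La by rewrite -[i * k]addn0 run_ab //; lia.
have a1 : ab_omega (i * k).+1 = La by rewrite -addn1 run_ab //; lia.
by rewrite (ab_omega_no_aa a0) in a1.
Qed.

Theorem mainTheorem14 :
  (forall w, lang A_ab w <-> w = ab_omega) /\
  ~ (exists C : automaton letter, forall w, J C w <-> Jbox A_ab w) /\
  Jbox A_ab ab_omega /\
  psi_equiv w_bad ab_omega /\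
  ~ Jbox A_ab w_bad.
Proof.
have w_bad_equiv : psi_equiv w_bad ab_omega.
  exact: inf_often_psi_equiv w_bad_inf_often ab_omega_inf_often.
split; first exact: lang_A_ab.
split.
  move=> [C HC]; apply: not_Jbox_w_bad; apply/HC.
  exact: J_psi_closed w_bad_equiv (proj2 (HC ab_omega) Jbox_ab_omega).
by split; [exact: Jbox_ab_omega | split; [exact: w_bad_equiv | exact: not_Jbox_w_bad]].
Qed.
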